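(* Let $A\in\tilde\omega_n^{0,1}$ and let $C_1,\dots,C_k$ be all the directed cycles of $G_A$. Then $$\operatorname{per}(I-A)=\prod_{i=1}^k\big(1+(-1)^{l(C_i)}w(C_i)\big),$$ where the empty product equals $1$.
   Context: An $n\times n$ matrix is row substochastic if all its entries are nonnegative and each row sum is at most $1$. $\tilde\omega_n^{0,1}$ denotes the set of all $n\times n$ row substochastic matrices with zero main diagonal and at most one positive entry in each row. For an $n\times n$ matrix $A=[a_{ij}]$, $G_A$ is the directed weighted graph on vertices $v_1,\dots,v_n$ having a directed edge $v_i\to v_j$ of weight $a_{ij}$ exactly when $a_{ij}\ne 0$. For a directed cycle $C$ of $G_A$, $l(C)$ is its number of edges and $w(C)$ is the product of the weights of its edges. The permanent is $\operatorname{per}(M)=\sum_{\pi\in S_n}\prod_i m_{i\pi(i)}$, and $I$ is the identity matrix. *)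

From HB Require Import structures.
From mathcomp Require Import all_boot all_order all_algebra all_fingroup.
Set Implicit Arguments. Unset Strict Implicit. Unset Printing Implicit Defensive.
Import Order.TTheory GRing.Theory Num.Theory.
Local Open Scope ring_scope.

Definition per (R : comNzRingType) (n : nat) (M : 'M[R]_n) : R :=
  \sum_(s : 'S_n) \prod_(i < n) M i (s i).

(* A in tilde-omega_n^{0,1}: row substochastic, zero diagonal,
   at most one positive entry per row *)
Definition omega01 (R : realFieldType) (n : nat) (A : 'M[R]_n) : Prop :=
  [/\ forall i j, 0 <= A i j,
      forall i, \sum_(j < n) A i j <= 1,
      forall i, A i i = 0
    & forall i j k, 0 < A i j -> 0 < A i k -> j = k].

Definition edgeA (R : comNzRingType) (n : nat) (A : 'M[R]_n) : rel 'I_n :=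
  fun i j => A i j != 0.

(* a directed cycle, given as a nonempty duplicate-free vertex sequence
   [v_1; ...; v_l] with edges v_1->v_2->...->v_l->v_1 *)
Definition is_dcycle (R : comNzRingType) (n : nat) (A : 'M[R]_n)
  (c : seq 'I_n) : bool :=
  [&& c != [::], uniq c & path.cycle (edgeA A) c].

(* two sequences represent the same directed cycle iff one is a rotation
   of the other *)
Definition same_cycle (n : nat) (c d : seq 'I_n) : bool :=
  has (fun k => rot k c == d) (iota 0 (size c)).

Definition cyc_len (n : nat) (c : seq 'I_n) : nat := size c.
Definition cyc_weight (R : comNzRingType) (n : nat) (A : 'M[R]_n)
  (c : seq 'I_n) : R :=
  \prod_(i <- c) A i (next c i).

From HB Require Import structures.
From mathcomp Require Import all_boot all_order all_algebra all_fingroup.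
Import Order.TTheory GRing.Theory Num.Theory.
Local Open Scope ring_scope.
Set Implicit Arguments. Unset Strict Implicit.

(* Expanding each factor [delta_ij - a_ij] splits per(I - A) into a sum, over
   vertex sets S, of the signed weights of the permutations moving only points
   of S. As each row of A has at most one nonzero entry, the only such
   permutation of nonzero weight is the out-neighbour map on S, and it is a
   permutation exactly when S is a disjoint union of cycles of G_A; the term of
   S is then the product of the (-1)^l(C) w(C) over these cycles. Summing over
   all sets of cycles yields the product of the 1 + (-1)^l(C) w(C). *)

Lemma uniq_fcycle_rot (T : finType) (f : T -> T) (c d : seq T) z :
    fcycle f c -> fcycle f d -> uniq c -> uniq d -> z \in c -> z \in d ->
  exists2 k, (k < size c)%N & rot k c = d.
Proof.
case: d => [//|y d] fc fd uc ud zc zd.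
have yc : y \in c.
  by rewrite -(mem_rot (index z c)) -(fingraph.orbitE fc uc zc)
    (fingraph.orbitE fd ud zd) mem_rot mem_head.
exists (index y c); first by rewrite index_mem.
rewrite -(fingraph.orbitE fc uc yc) (fingraph.orbitE fd ud (mem_head y d)).
by rewrite /= eqxx rot0.
Qed.

Lemma same_cycle_rot n (c : seq 'I_n) k : (k < size c)%N -> same_cycle c (rot k c).
Proof. by move=> kc; apply/hasP; exists k; rewrite ?mem_iota. Qed.

Lemma same_cycle_refl n (c : seq 'I_n) : c != [::] -> same_cycle c c.
Proof. by rewrite -size_eq0 -lt0n => c0; rewrite -{2}(rot0 c) same_cycle_rot. Qed.

Lemma mem_same_cycle n (c d : seq 'I_n) : same_cycle c d -> d =i c.
Proof. by case/hasP => k _ /eqP <- x; rewrite mem_rot. Qed.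

Lemma injective_ext_id (T : finType) (f : T -> T) (S : {pred T}) :
    {in S, forall x, f x \in S} -> {in S &, injective f} ->
  injective (fun x => if x \in S then f x else x).
Proof.
move=> fS f_inj x y; case: ifP => xS; case: ifP => yS.
- exact: f_inj.
- by move=> fx_y; move: yS; rewrite -fx_y fS.
- by move=> x_fy; move: xS; rewrite x_fy fS.
- by [].
Qed.

Lemma count_le1_nth (T : Type) (p : pred T) (s : seq T) x0 (j j' : 'I_(size s)) :
  (count p s <= 1)%N -> p (nth x0 s j) -> p (nth x0 s j') -> j = j'.
Proof.
move=> cnt pj pj'; apply/eqP; apply: contraTT cnt => neq.
rewrite -ltnNge -sum1_count (big_nth x0) big_mkord (bigD1 j) //=.
by rewrite (bigD1 j') /= 1?eq_sym ?pj' // add1n ltnS leq_addr.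
Qed.

Lemma per_1subE (R : comNzRingType) n (A : 'M[R]_n) :
  per (1%:M - A) =
  \sum_(S : {set 'I_n}) \sum_(s : 'S_n | perm_on S s) \prod_(i in S) - A i (s i).
Proof.
have expand (s : 'S_n) : \prod_i (1%:M - A) i (s i) =
    \sum_(S : {set 'I_n}) if perm_on S s then \prod_(i in S) - A i (s i) else 0.
  under eq_bigr => i _ do rewrite !mxE addrC.
  rewrite bigA_distr; apply: eq_bigr => S _; rewrite big_if /=.
  case: ifP => [sS | /negbT/subsetPn [i /= si_i iS]].
    rewrite [X in _ * X]big1 ?mulr1 // => i iS.
    by rewrite (out_perm sS iS) eqxx.
  by rewrite [X in _ * X](bigD1 i) //= eq_sym (negbTE si_i) mul0r mulr0.
rewrite /per; under eq_bigr => s _ do rewrite expand.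
by rewrite exchange_big; apply: eq_bigr => S _; rewrite -big_mkcond.
Qed.

Section OutNeighbour.

Variables (R : realFieldType) (n : nat) (A : 'M[R]_n).
Hypothesis omegaA : omega01 A.

(* Loops are excluded by the zero diagonal, so [out_nbr i = i] means that no
   arc leaves [i]. *)
Definition out_nbr (i : 'I_n) : 'I_n := odflt i [pick j | A i j != 0].

Lemma out_nbrP i j : A i j != 0 -> out_nbr i = j.
Proof.
case: omegaA => A_ge0 _ _ A_pos_uniq Aij; rewrite /out_nbr.
case: pickP => [k Aik | /(_ j)]; last by rewrite Aij.
by apply: (A_pos_uniq i); rewrite lt_def ?Aij ?Aik A_ge0.
Qed.

Lemma out_nbr_neq i : A i (out_nbr i) != 0 -> out_nbr i != i.
Proof.
by case: omegaA => _ _ A_diag _; apply: contraNneq => ->; rewrite A_diag eqxx.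
Qed.

Lemma dcycle_out_nbr c i : is_dcycle A c -> i \in c -> out_nbr i = next c i.
Proof. by case/and3P => _ _ cc ic; apply: out_nbrP (next_cycle cc ic). Qed.

Lemma dcycle_fcycle c : is_dcycle A c -> fcycle out_nbr c.
Proof. by case/and3P => _ _; apply: sub_cycle => x y /out_nbrP /eqP. Qed.

Lemma dcycle_same_cycle c d z :
  is_dcycle A c -> is_dcycle A d -> z \in c -> z \in d -> same_cycle c d.
Proof.
move=> dc dd zc zd; have [_ uc _] := and3P dc; have [_ ud _] := and3P dd.
have [k kc <-] := uniq_fcycle_rot (dcycle_fcycle dc) (dcycle_fcycle dd) uc ud zc zd.
exact: same_cycle_rot.
Qed.

Lemma dcycle_weight c : is_dcycle A c ->
  \prod_(i in [set x in c]) - A i (out_nbr i) = (-1) ^+ cyc_len c * cyc_weight A c.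
Proof.
move=> dc; have [_ uc _] := and3P dc.
rewrite prodrN cardsE (card_uniqP uc) (eq_bigl (mem c)) => [|i]; last by rewrite inE.
rewrite -big_uniq //; congr (_ * _); apply: eq_big_seq => i ic.
by rewrite (dcycle_out_nbr dc ic).
Qed.

Definition out_nbr_on (S : {set 'I_n}) (i : 'I_n) : 'I_n :=
  if i \in S then out_nbr i else i.

Definition cover_term (S : {set 'I_n}) : R :=
  if injectiveb (out_nbr_on S) then \prod_(i in S) - A i (out_nbr i) else 0.

Lemma perm_on_prod_neq0 S (s : 'S_n) : perm_on S s ->
  \prod_(i in S) - A i (s i) != 0 -> s =1 out_nbr_on S.
Proof.
move=> sS nz i; rewrite /out_nbr_on.
case: ifP => iS; last by rewrite (out_perm sS) ?iS.
apply/esym/out_nbrP; apply: contraNneq nz => Asi0.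
by rewrite (bigD1 i) //= Asi0 oppr0 mul0r.
Qed.

Lemma sum_perm_on_cover_term S :
  \sum_(s : 'S_n | perm_on S s) \prod_(i in S) - A i (s i) = cover_term S.
Proof.
rewrite /cover_term; case: injectiveP => [inj | ninj]; last first.
  rewrite big1 // => s sS; apply/eqP; apply: contraT => /(perm_on_prod_neq0 sS) sE.
  by case: ninj => x y; rewrite -!sE => /perm_inj.
have pS : perm_on S (perm inj).
  apply/subsetP => i; rewrite inE permE /out_nbr_on.
  by case: ifP => // _; rewrite eqxx.
rewrite (bigD1 (perm inj)) //= [X in _ + X]big1 ?addr0 => [|s /andP [sS ns]].
  by apply: eq_bigr => i iS; rewrite permE /out_nbr_on iS.
apply/eqP; apply: contraNT ns => /(perm_on_prod_neq0 sS) sE.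
by apply/eqP/permP => i; rewrite permE sE.
Qed.

Lemma cover_term_neq0_dcycle S i : cover_term S != 0 -> i \in S ->
  exists2 c, is_dcycle A c & i \in c /\ {subset c <= S}.
Proof.
rewrite /cover_term; case: injectiveP => [inj nz iS|]; last by rewrite eqxx.
have Anz j : j \in S -> A j (out_nbr j) != 0.
  by move=> jS; apply: contraNneq nz => A0; rewrite (bigD1 j) //= A0 oppr0 mul0r.
have out_nbrS j : j \in S -> out_nbr j \in S.
  move=> jS; apply: contraT => njS; have := out_nbr_neq (Anz j jS).
  by rewrite (inj (out_nbr j) j) ?eqxx // /out_nbr_on (negbTE njS) jS.
pose p := perm inj; pose o := fingraph.orbit p i.
have pE j : j \in S -> p j = out_nbr j by move=> jS; rewrite permE /out_nbr_on jS.
have oS : {subset o <= S}.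
  by move=> _ /trajectP [m _ ->]; elim: m => //= m IH; rewrite pE ?out_nbrS.
exists o; last by split; [apply: fingraph.in_orbit |].
apply/and3P; split; last first.
- apply: (sub_in_cycle (P := mem S) (e := frel p)).
  + by move=> x y xS _ /eqP <-; rewrite /edgeA pE ?Anz.
  + by apply/allP.
  + exact: cycle_orbit (@perm_inj _ p) i.
- exact: fingraph.orbit_uniq.
- by apply/eqP => o0; have := fingraph.in_orbit p i; rewrite -/o o0.
Qed.

End OutNeighbour.

Section CycleList.

Variables (R : realFieldType) (n : nat) (A : 'M[R]_n) (cs : seq (seq 'I_n)).
Hypotheses (omegaA : omega01 A) (cs_dcycle : all (is_dcycle A) cs)
  (cs_count : forall c, is_dcycle A c -> count (same_cycle c) cs = 1%N).

Local Notation cyc j := (nth [::] cs j).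

Definition cycle_vertices (j : 'I_(size cs)) : {set 'I_n} := [set x in cyc j].

Definition cycles_union (T : {set 'I_(size cs)}) : {set 'I_n} :=
  \bigcup_(j in T) cycle_vertices j.

Lemma cyc_dcycle (j : 'I_(size cs)) : is_dcycle A (cyc j).
Proof. exact/(allP cs_dcycle)/mem_nth. Qed.

Lemma cycle_vertices_inj j j' x :
  x \in cycle_vertices j -> x \in cycle_vertices j' -> j = j'.
Proof.
rewrite !inE => xj xj'; apply: (@count_le1_nth _ (same_cycle (cyc j)) _ [::]).
- by rewrite cs_count ?cyc_dcycle.
- by case/and3P: (cyc_dcycle j) => /same_cycle_refl.
- exact: (dcycle_same_cycle omegaA (cyc_dcycle j) (cyc_dcycle j') xj xj').
Qed.

Lemma out_nbr_cycle_vertices j x :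
  x \in cycle_vertices j -> out_nbr A x \in cycle_vertices j.
Proof.
by rewrite !inE => xj; rewrite (dcycle_out_nbr omegaA (cyc_dcycle j) xj) mem_next.
Qed.

Lemma cycle_vertices_subset_union (T : {set 'I_(size cs)}) j :
  (j \in T) = (cycle_vertices j \subset cycles_union T).
Proof.
apply/idP/idP => [jT | /subsetP sub]; first exact: bigcup_sup.
case/and3P: (cyc_dcycle j); case def_c: (cyc j) => [//|x c] _ _ _.
have xj : x \in cycle_vertices j by rewrite inE def_c mem_head.
by have /bigcupP [j' j'T /(cycle_vertices_inj xj) ->] := sub x xj.
Qed.

Lemma cycles_union_inj : injective cycles_union.
Proof.
by move=> T T' eqTT'; apply/setP => j; rewrite !cycle_vertices_subset_union eqTT'.
Qed.

Lemma cycles_union_out_nbr_inj (T : {set 'I_(size cs)}) :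
  {in cycles_union T &, injective (out_nbr A)}.
Proof.
move=> x y /bigcupP [j _ xj] /bigcupP [j' _ yj'] eq_out.
have eq_jj' : j = j'.
  apply: (cycle_vertices_inj (out_nbr_cycle_vertices xj)).
  by rewrite eq_out out_nbr_cycle_vertices.
move: yj' eq_out; rewrite -eq_jj' !inE => yj; rewrite inE in xj.
rewrite !(dcycle_out_nbr omegaA (cyc_dcycle j)) //.
by case/and3P: (cyc_dcycle j) => _ uc _ /(can_inj (prev_next uc)).
Qed.

Lemma cover_term_cycles_union (T : {set 'I_(size cs)}) :
  cover_term A (cycles_union T) =
  \prod_(j in T) ((-1) ^+ cyc_len (cyc j) * cyc_weight A (cyc j)).
Proof.
have out_nbr_union : {in cycles_union T, forall x, out_nbr A x \in cycles_union T}.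
  move=> x /bigcupP [j jT xj]; apply/bigcupP.
  by exists j; rewrite ?out_nbr_cycle_vertices.
have out_nbr_on_inj :=
  injective_ext_id out_nbr_union (cycles_union_out_nbr_inj (T:=T)).
rewrite /cover_term (introT (injectiveP _) out_nbr_on_inj).
rewrite [cycles_union T]big_mkcond /= partition_disjoint_bigcup; last first.
  move=> j j' neq; rewrite -setI_eq0; do 2 case: ifP => _; rewrite ?setI0 ?set0I //.
  apply/set0Pn => [[x /setIP [xj xj']]].
  by rewrite (cycle_vertices_inj xj xj') eqxx in neq.
rewrite [RHS]big_mkcond; apply: eq_bigr => j _; case: ifP => _.
  exact: dcycle_weight (cyc_dcycle j).
by rewrite big_set0.
Qed.

Lemma cover_term_neq0 (S : {set 'I_n}) :
  cover_term A S != 0 -> S = cycles_union [set j | cycle_vertices j \subset S].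
Proof.
move=> nz; apply/setP => x; apply/idP/bigcupP => [xS | [j]]; last first.
  by rewrite inE => /subsetP; apply.
have [c dc [xc cS]] := cover_term_neq0_dcycle omegaA nz xS.
have /hasP [d dcs cd] : has (same_cycle c) cs by rewrite has_count cs_count.
have jlt : (index d cs < size cs)%N by rewrite index_mem.
have cyc_j : cyc (Ordinal jlt) = d by rewrite nth_index.
exists (Ordinal jlt); last by rewrite inE cyc_j (mem_same_cycle cd).
by rewrite inE; apply/subsetP => y; rewrite inE cyc_j (mem_same_cycle cd); apply: cS.
Qed.

End CycleList.

Theorem mainTheorem7 (R : realFieldType) (n : nat) (A : 'M[R]_n)
  (cs : seq (seq 'I_n)) :
  omega01 A ->
  all (is_dcycle A) cs ->
  (forall c, is_dcycle A c -> count (same_cycle c) cs = 1%N) ->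
  per (1%:M - A) =
  \prod_(c <- cs) (1 + (-1) ^+ cyc_len c * cyc_weight A c).
Proof.
move=> omegaA cs_dcycle cs_count.
transitivity (\sum_(S : {set 'I_n}) cover_term A S).
  by rewrite per_1subE; apply: eq_bigr => S _; apply: sum_perm_on_cover_term.
rewrite (bigID (mem [set cycles_union T | T : {set 'I_(size cs)}])) /=.
rewrite [X in _ + X]big1 ?addr0 => [|S].
  rewrite big_imset /=; last first.
    by move=> T T' _ _; apply: (cycles_union_inj omegaA cs_dcycle cs_count).
  rewrite (big_nth [::]) big_mkord; under [RHS]eq_bigr => j _ do rewrite addrC.
  rewrite bigA_distr; apply: eq_big => [T | T _]; first by rewrite inE.
  by rewrite cover_term_cycles_union // big_mkcond.
apply: contraNeq => /(cover_term_neq0 omegaA cs_count) ->.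
exact: imset_f.
Qed.
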